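(* Let $(\mathcal{D},\Psi)$ be a braided monoidal category, let $(A,m,u)$ be an algebra in $\mathcal{D}$, let $S$ be an object of $\mathcal{D}$ and $\phi\colon S\to A$ a morphism in $\mathcal{D}$. Then the left centralizer $\operatorname{Cent}^l_A(S)\to A$ admits the structure of an algebra in $\mathcal{D}$, unique up to unique isomorphism of algebras, such that the structure morphism $\operatorname{Cent}^l_A(S)\to A$ is a morphism of algebras in $\mathcal{D}$.
   Context: All categories are $\Bbbk$-linear abelian monoidal categories over a field $\Bbbk$ (associativity and unit isomorphisms suppressed). The left centralizer $\operatorname{Cent}^l_A(S)\to A$ is defined as the terminal object in the category whose objects are pairs $(C,\gamma)$ with $C\in\mathcal{D}$ and $\gamma\colon C\to A$ a morphism in $\mathcal{D}$ satisfying $m(\gamma\otimes\phi)=m(\phi\otimes\gamma)\Psi_{C,S}$ as morphisms $C\otimes S\to A$, and whose morphisms $(C,\gamma)\to(C',\gamma')$ are morphisms $f\colon C\to C'$ in $\mathcal{D}$ with $\gamma' f=\gamma$. *)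

Set Implicit Arguments.
Unset Strict Implicit.

Record BraidedMonoidalCategory := {
  Obj : Type;
  Hom : Obj -> Obj -> Type;
  comp : forall {X Y Z : Obj}, Hom Y Z -> Hom X Y -> Hom X Z;
  idm : forall X : Obj, Hom X X;
  comp_assoc : forall X Y Z W (f : Hom X Y) (g : Hom Y Z) (h : Hom Z W),
      comp h (comp g f) = comp (comp h g) f;
  comp_id_l : forall X Y (f : Hom X Y), comp (idm Y) f = f;
  comp_id_r : forall X Y (f : Hom X Y), comp f (idm X) = f;

  tens : Obj -> Obj -> Obj;
  tensm : forall {X X' Y Y' : Obj}, Hom X Y -> Hom X' Y' -> Hom (tens X X') (tens Y Y');
  tensm_id : forall X Y, tensm (idm X) (idm Y) = idm (tens X Y);
  tensm_comp : forall X X' Y Y' Z Z' (f : Hom X Y) (f' : Hom X' Y')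
      (g : Hom Y Z) (g' : Hom Y' Z'),
      tensm (comp g f) (comp g' f') = comp (tensm g g') (tensm f f');
  unit : Obj;
  assoc : forall X Y Z, Hom (tens (tens X Y) Z) (tens X (tens Y Z));
  assoc_inv : forall X Y Z, Hom (tens X (tens Y Z)) (tens (tens X Y) Z);
  assoc_iso1 : forall X Y Z, comp (assoc_inv X Y Z) (assoc X Y Z) = idm _;
  assoc_iso2 : forall X Y Z, comp (assoc X Y Z) (assoc_inv X Y Z) = idm _;
  assoc_nat : forall X X' Y Y' Z Z' (f : Hom X X') (g : Hom Y Y') (h : Hom Z Z'),
      comp (assoc X' Y' Z') (tensm (tensm f g) h)
      = comp (tensm f (tensm g h)) (assoc X Y Z);
  lunit : forall X, Hom (tens unit X) X;
  lunit_inv : forall X, Hom X (tens unit X);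
  lunit_iso1 : forall X, comp (lunit_inv X) (lunit X) = idm _;
  lunit_iso2 : forall X, comp (lunit X) (lunit_inv X) = idm _;
  lunit_nat : forall X Y (f : Hom X Y),
      comp (lunit Y) (tensm (idm unit) f) = comp f (lunit X);
  runit : forall X, Hom (tens X unit) X;
  runit_inv : forall X, Hom X (tens X unit);
  runit_iso1 : forall X, comp (runit_inv X) (runit X) = idm _;
  runit_iso2 : forall X, comp (runit X) (runit_inv X) = idm _;
  runit_nat : forall X Y (f : Hom X Y),
      comp (runit Y) (tensm f (idm unit)) = comp f (runit X);
  pentagon : forall W X Y Z,
      comp (assoc W X (tens Y Z)) (assoc (tens W X) Y Z)
      = comp (tensm (idm W) (assoc X Y Z))
             (comp (assoc W (tens X Y) Z) (tensm (assoc W X Y) (idm Z)));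
  triangle : forall X Y,
      comp (tensm (idm X) (lunit Y)) (assoc X unit Y) = tensm (runit X) (idm Y);

  braid : forall X Y, Hom (tens X Y) (tens Y X);
  braid_inv : forall X Y, Hom (tens Y X) (tens X Y);
  braid_iso1 : forall X Y, comp (braid_inv X Y) (braid X Y) = idm _;
  braid_iso2 : forall X Y, comp (braid X Y) (braid_inv X Y) = idm _;
  braid_nat : forall X X' Y Y' (f : Hom X X') (g : Hom Y Y'),
      comp (braid X' Y') (tensm f g) = comp (tensm g f) (braid X Y);
  hexagon1 : forall X Y Z,
      comp (assoc Y Z X) (comp (braid X (tens Y Z)) (assoc X Y Z))
      = comp (tensm (idm Y) (braid X Z))
             (comp (assoc Y X Z) (tensm (braid X Y) (idm Z)));
  hexagon2 : forall X Y Z,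
      comp (assoc_inv Z X Y) (comp (braid (tens X Y) Z) (assoc_inv X Y Z))
      = comp (tensm (braid X Z) (idm Y))
             (comp (assoc_inv X Z Y) (tensm (idm X) (braid Y Z)))
}.

Arguments Hom : clear implicits.
Arguments Obj : clear implicits.
Arguments comp {_ _ _ _} _ _.
Arguments idm {_} _.
Arguments tens {_} _ _.
Arguments tensm {_ _ _ _ _} _ _.
Arguments unit {_}.
Arguments assoc {_} _ _ _.
Arguments lunit {_} _.
Arguments runit {_} _.
Arguments braid {_} _ _.

Section Algebras.
Variable D : BraidedMonoidalCategory.

Definition is_algebra (A : Obj D) (m : Hom D (tens A A) A) (u : Hom D unit A) : Prop :=
  comp m (tensm m (idm A)) = comp m (comp (tensm (idm A) m) (assoc A A A))
  /\ comp m (tensm u (idm A)) = lunit A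
  /\ comp m (tensm (idm A) u) = runit A.

Definition is_algebra_morphism (B A : Obj D)
    (mB : Hom D (tens B B) B) (uB : Hom D unit B)
    (mA : Hom D (tens A A) A) (uA : Hom D unit A) (f : Hom D B A) : Prop :=
  comp f mB = comp mA (tensm f f) /\ comp f uB = uA.

Definition is_iso (X Y : Obj D) (f : Hom D X Y) : Prop :=
  exists g : Hom D Y X, comp g f = idm X /\ comp f g = idm Y.

(* objects of the category whose terminal object is Cent^l_A(S) *)
Definition centralizes (A S : Obj D) (m : Hom D (tens A A) A) (phi : Hom D S A)
    (C : Obj D) (gamma : Hom D C A) : Prop :=
  comp m (tensm gamma phi) = comp m (comp (tensm phi gamma) (braid C S)).

Definition is_left_centralizer (A S : Obj D) (m : Hom D (tens A A) A)
    (phi : Hom D S A) (C : Obj D) (gamma : Hom D C A) : Prop :=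
  centralizes m phi gamma /\
  forall (C' : Obj D) (gamma' : Hom D C' A), centralizes m phi gamma' ->
    exists! f : Hom D C' C, comp gamma f = gamma'.

End Algebras.

(* Centralizing S is stable under precomposition, so the structure map of a
   terminal centralizing pair (C, gamma) is a monomorphism.  The unit u and the
   product m (g ⊗ h) of two morphisms centralizing S again centralize S (by
   associativity of m and the hexagon axiom for the braiding of C ⊗ C' past S),
   so terminality yields m_C and u_C with gamma m_C = m (gamma ⊗ gamma) and
   gamma u_C = u; as gamma is monic, the algebra axioms of C are inherited from
   those of A.  Two such algebras are compared by the canonical isomorphism
   between terminal objects, which is an algebra morphism because the target
   structure map is monic. *)

From Corelib Require Import ssreflect.

Local Notation "g ∘ f" := (comp g f) (at level 40, left associativity).
Local Notation "f ⊗ g" := (tensm f g) (at level 35).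

Section BraidedMonoidal.
Context {D : BraidedMonoidalCategory}.
Local Notation "1" := (idm _).

Definition monic {X Y : Obj D} (f : Hom D X Y) : Prop :=
  forall Z (a b : Hom D Z X), f ∘ a = f ∘ b -> a = b.

Lemma split_mono_monic {X Y : Obj D} {f : Hom D X Y} {g : Hom D Y X} :
  g ∘ f = 1 -> monic f.
Proof. by move=> gf Z a b fab; rewrite -(comp_id_l a) -(comp_id_l b) -gf -!comp_assoc fab. Qed.

Lemma tensm_comp_idl {X Y Z : Obj D} (W : Obj D) (f : Hom D X Y) (g : Hom D Y Z) :
  idm W ⊗ (g ∘ f) = (1 ⊗ g) ∘ (1 ⊗ f).
Proof. by rewrite -tensm_comp comp_id_l. Qed.

Lemma tensm_comp_idr {X Y Z : Obj D} (W : Obj D) (f : Hom D X Y) (g : Hom D Y Z) :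
  (g ∘ f) ⊗ idm W = (g ⊗ 1) ∘ (f ⊗ 1).
Proof. by rewrite -tensm_comp comp_id_l. Qed.

Lemma tensm_unit_l_inj {X Y : Obj D} (f g : Hom D X Y) :
  idm unit ⊗ f = idm unit ⊗ g -> f = g.
Proof.
by move=> fg; rewrite -(comp_id_r f) -(comp_id_r g) -(lunit_iso2 X) !comp_assoc -!lunit_nat fg.
Qed.

Lemma tensm_unit_r_inj {X Y : Obj D} (f g : Hom D X Y) :
  f ⊗ idm unit = g ⊗ idm unit -> f = g.
Proof.
by move=> fg; rewrite -(comp_id_r f) -(comp_id_r g) -(runit_iso2 X) !comp_assoc -!runit_nat fg.
Qed.

(* Kelly's identity; it follows from the pentagon and triangle axioms. *)
Lemma runit_tens (X Y : Obj D) :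
  (idm X ⊗ runit Y) ∘ assoc X Y unit = runit (tens X Y).
Proof.
apply: tensm_unit_r_inj; apply: (split_mono_monic (assoc_iso1 X Y unit)).
rewrite -(triangle (tens X Y) unit) -(tensm_id X Y).
rewrite comp_assoc assoc_nat -comp_assoc pentagon !comp_assoc -tensm_comp_idl triangle.
by rewrite tensm_comp_idr comp_assoc -assoc_nat.
Qed.

Lemma idm_tensm_runit (X Y : Obj D) :
  idm X ⊗ runit Y = runit (tens X Y) ∘ assoc_inv X Y unit.
Proof. by rewrite -runit_tens -comp_assoc assoc_iso2 comp_id_r. Qed.

Lemma runit_braid (X : Obj D) : runit X ∘ braid unit X = lunit X.
Proof.
apply: tensm_unit_l_inj; apply: (split_mono_monic (braid_iso1 unit X)).
rewrite tensm_comp_idl idm_tensm_runit !comp_assoc -runit_nat -!comp_assoc -hexagon2.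
rewrite !comp_assoc -idm_tensm_runit -(braid_nat (runit unit)) -comp_assoc.
by rewrite -triangle -comp_assoc assoc_iso2 comp_id_r.
Qed.

Lemma braid_tens_l (X Y Z : Obj D) :
  braid (tens X Y) Z =
    assoc Z X Y ∘ ((braid X Z ⊗ 1) ∘ (assoc_inv X Z Y ∘ (1 ⊗ braid Y Z))) ∘ assoc X Y Z.
Proof.
rewrite -hexagon2 !comp_assoc assoc_iso2 comp_id_l.
by rewrite -comp_assoc assoc_iso1 comp_id_r.
Qed.

Section Algebra.
Context {A : Obj D} {m : Hom D (tens A A) A} {u : Hom D unit A}.

Lemma algebra_morphism_of_monic {C1 C2 : Obj D} {gamma1 : Hom D C1 A}
    {gamma2 : Hom D C2 A} {m1 : Hom D (tens C1 C1) C1} {u1 : Hom D unit C1}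
    {m2 : Hom D (tens C2 C2) C2} {u2 : Hom D unit C2} {f : Hom D C1 C2} :
  monic gamma2 -> is_algebra_morphism m1 u1 m u gamma1 ->
  is_algebra_morphism m2 u2 m u gamma2 -> gamma2 ∘ f = gamma1 ->
  is_algebra_morphism m1 u1 m2 u2 f.
Proof.
move=> gamma2_monic [gamma1_m gamma1_u] [gamma2_m gamma2_u] gamma2f.
split; apply: gamma2_monic; rewrite !comp_assoc gamma2f ?gamma1_u ?gamma2_u //.
by rewrite gamma2_m gamma1_m -comp_assoc -tensm_comp gamma2f.
Qed.

Hypothesis HA : is_algebra m u.

Lemma mul_tensmA {X Y Z : Obj D} (f : Hom D X A) (g : Hom D Y A) (h : Hom D Z A) :
  m ∘ ((m ∘ (f ⊗ g)) ⊗ h) = m ∘ (f ⊗ (m ∘ (g ⊗ h))) ∘ assoc X Y Z.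
Proof.
have -> : (m ∘ (f ⊗ g)) ⊗ h = (m ⊗ 1) ∘ ((f ⊗ g) ⊗ h).
  by rewrite -tensm_comp comp_id_l.
have -> : f ⊗ (m ∘ (g ⊗ h)) = (1 ⊗ m) ∘ (f ⊗ (g ⊗ h)).
  by rewrite -tensm_comp comp_id_l.
by rewrite comp_assoc (proj1 HA) -!comp_assoc assoc_nat.
Qed.

Lemma mul_tensmA_inv {X Y Z : Obj D} (f : Hom D X A) (g : Hom D Y A) (h : Hom D Z A) :
  m ∘ (f ⊗ (m ∘ (g ⊗ h))) = m ∘ ((m ∘ (f ⊗ g)) ⊗ h) ∘ assoc_inv X Y Z.
Proof. by rewrite mul_tensmA -comp_assoc assoc_iso2 comp_id_r. Qed.

Lemma mul_unit_tensm {X : Obj D} (f : Hom D X A) : m ∘ (u ⊗ f) = f ∘ lunit X.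
Proof.
have -> : u ⊗ f = (u ⊗ 1) ∘ (1 ⊗ f) by rewrite -tensm_comp comp_id_l comp_id_r.
by rewrite comp_assoc (proj1 (proj2 HA)) lunit_nat.
Qed.

Lemma mul_tensm_unit {X : Obj D} (f : Hom D X A) : m ∘ (f ⊗ u) = f ∘ runit X.
Proof.
have -> : f ⊗ u = (1 ⊗ u) ∘ (f ⊗ 1) by rewrite -tensm_comp comp_id_l comp_id_r.
by rewrite comp_assoc (proj2 (proj2 HA)) runit_nat.
Qed.

Lemma algebra_of_monic {C : Obj D} {gamma : Hom D C A}
    {mC : Hom D (tens C C) C} {uC : Hom D unit C} :
  monic gamma -> is_algebra_morphism mC uC m u gamma -> is_algebra mC uC.
Proof.
move=> gamma_monic [gamma_m gamma_u].
have gamma_mC X Y (f : Hom D X C) (g : Hom D Y C) :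
    gamma ∘ (mC ∘ (f ⊗ g)) = m ∘ ((gamma ∘ f) ⊗ (gamma ∘ g)).
  by rewrite comp_assoc gamma_m -comp_assoc tensm_comp.
split; [|split]; apply: gamma_monic.
- rewrite [in RHS](comp_assoc _ _ mC) [in RHS]comp_assoc !gamma_mC !comp_id_r.
  by rewrite gamma_m mul_tensmA.
- by rewrite gamma_mC gamma_u comp_id_r mul_unit_tensm.
- by rewrite gamma_mC gamma_u comp_id_r mul_tensm_unit.
Qed.

Context {S : Obj D} {phi : Hom D S A}.

Lemma centralizes_comp {C C' : Obj D} {g : Hom D C A} (h : Hom D C' C) :
  centralizes m phi g -> centralizes m phi (g ∘ h).
Proof.
rewrite /centralizes => g_cent.
rewrite -(comp_id_r phi) !tensm_comp comp_assoc g_cent.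
by rewrite -!comp_assoc braid_nat.
Qed.

Lemma centralizes_unit : centralizes m phi u.
Proof.
by rewrite /centralizes mul_unit_tensm comp_assoc mul_tensm_unit -comp_assoc runit_braid.
Qed.

Lemma centralizes_mul {C C' : Obj D} {g : Hom D C A} {h : Hom D C' A} :
  centralizes m phi g -> centralizes m phi h -> centralizes m phi (m ∘ (g ⊗ h)).
Proof.
rewrite /centralizes => g_cent h_cent.
rewrite mul_tensmA h_cent (comp_assoc _ _ m) -[g]comp_id_r tensm_comp comp_id_r.
rewrite (comp_assoc _ _ m) mul_tensmA_inv g_cent (comp_assoc _ _ m) -[h]comp_id_r tensm_comp.
by rewrite comp_id_r (comp_assoc _ _ m) mul_tensmA braid_tens_l !comp_assoc.
Qed.

Lemma left_centralizer_monic {C : Obj D} {gamma : Hom D C A} :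
  is_left_centralizer m phi gamma -> monic gamma.
Proof.
move=> [gamma_cent gamma_terminal] Z f1 f2 gamma_f12.
have [f [_ f_unique]] := gamma_terminal _ _ (centralizes_comp f1 gamma_cent).
by rewrite -(f_unique f1) // -(f_unique f2).
Qed.

Lemma left_centralizer_iso {C1 C2 : Obj D} {gamma1 : Hom D C1 A} {gamma2 : Hom D C2 A}
    {f : Hom D C1 C2} :
  is_left_centralizer m phi gamma1 -> is_left_centralizer m phi gamma2 ->
  gamma2 ∘ f = gamma1 -> is_iso f.
Proof.
move=> gamma1C gamma2C gamma2f.
have [g [gamma1g _]] := proj2 gamma1C _ _ (proj1 gamma2C).
exists g; split.
- by apply: (left_centralizer_monic gamma1C); rewrite comp_assoc gamma1g gamma2f comp_id_r.
- by apply: (left_centralizer_monic gamma2C); rewrite comp_assoc gamma2f gamma1g comp_id_r.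
Qed.

End Algebra.
End BraidedMonoidal.

Theorem proposition2p8 (D : BraidedMonoidalCategory) (A : Obj D)
    (m : Hom D (tens A A) A) (u : Hom D unit A) (HA : is_algebra m u)
    (S : Obj D) (phi : Hom D S A) :
  (* existence: any left centralizer carries an algebra structure making
     its structure morphism an algebra morphism *)
  (forall (C : Obj D) (gamma : Hom D C A),
     is_left_centralizer m phi gamma ->
     exists (mC : Hom D (tens C C) C) (uC : Hom D unit C),
       is_algebra mC uC /\ is_algebra_morphism mC uC m u gamma)
  /\
  (* uniqueness up to unique isomorphism of algebras (over A) *)
  (forall (C1 : Obj D) (gamma1 : Hom D C1 A)
          (m1 : Hom D (tens C1 C1) C1) (u1 : Hom D unit C1)
          (C2 : Obj D) (gamma2 : Hom D C2 A)
          (m2 : Hom D (tens C2 C2) C2) (u2 : Hom D unit C2),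
     is_left_centralizer m phi gamma1 ->
     is_algebra m1 u1 -> is_algebra_morphism m1 u1 m u gamma1 ->
     is_left_centralizer m phi gamma2 ->
     is_algebra m2 u2 -> is_algebra_morphism m2 u2 m u gamma2 ->
     exists! f : Hom D C1 C2,
       is_iso f /\ is_algebra_morphism m1 u1 m2 u2 f /\ comp gamma2 f = gamma1).
Proof.
split.
- move=> C gamma gammaC; have [gamma_cent gamma_terminal] := gammaC.
  have [mC [gamma_mC _]] := gamma_terminal _ _ (centralizes_mul HA gamma_cent gamma_cent).
  have [uC [gamma_uC _]] := gamma_terminal _ _ (centralizes_unit HA).
  have gamma_hom : is_algebra_morphism mC uC m u gamma by [].
  exists mC, uC; split => //.
  exact: (algebra_of_monic HA (left_centralizer_monic gammaC) gamma_hom).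
- move=> C1 gamma1 m1 u1 C2 gamma2 m2 u2 gamma1C _ gamma1_hom gamma2C _ gamma2_hom.
  have [f [gamma2f f_unique]] := proj2 gamma2C _ _ (proj1 gamma1C).
  exists f; split; last by move=> f' [_ [_ gamma2f']]; apply: f_unique.
  split; first exact: (left_centralizer_iso gamma1C gamma2C gamma2f).
  split => //; move: gamma2f.
  exact: (algebra_morphism_of_monic (left_centralizer_monic gamma2C) gamma1_hom gamma2_hom).
Qed.
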